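(* Let $G$ be a compact topological group acting continuously and strongly transitively by type-preserving automorphisms on a thick spherical building $\Delta$. Then $\Delta$ is finite.
   Context: The action of $G$ on $\Delta$ is called continuous if the stabilizer in $G$ of every residue of $\Delta$ is a closed subgroup of $G$. Strongly transitive means $G$ acts transitively on pairs $(\Sigma,C)$ consisting of an apartment $\Sigma$ and a chamber $C\in\Sigma$. *)

From Stdlib Require Import List Arith.
Import ListNotations.
Set Implicit Arguments.

Definition is_group {T : Type} (mul : T -> T -> T) (one : T) (inv : T -> T) : Prop :=
  (forall x y z, mul x (mul y z) = mul (mul x y) z) /\
  (forall x, mul one x = x) /\ (forall x, mul x one = x) /\
  (forall x, mul (inv x) x = one) /\ (forall x, mul x (inv x) = one).

Fixpoint gpow {T : Type} (mul : T -> T -> T) (one : T) (x : T) (n : nat) : T :=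
  match n with O => one | S k => mul x (gpow mul one x k) end.

Definition word_prod {T : Type} (mul : T -> T -> T) (one : T) (l : list T) : T :=
  fold_right mul one l.

(* ---------- Coxeter systems (W,S) via the universal property of the
   Coxeter presentation <S | s^2, (st)^{m(s,t)}> ---------- *)
Record CoxeterSystem := {
  cW :> Type;
  cmul : cW -> cW -> cW;
  cone : cW;
  cinv : cW -> cW;
  cS : cW -> Prop;
  c_group : is_group cmul cone cinv;
  c_invol : forall s, cS s -> s <> cone /\ cmul s s = cone;
  c_gen : forall w, exists l, Forall cS l /\ word_prod cmul cone l = w;
  c_presentation :
    forall (H : Type) (hm : H -> H -> H) (h1 : H) (hi : H -> H),
      is_group hm h1 hi ->
      forall f : cW -> H,
        (forall s, cS s -> hm (f s) (f s) = h1) ->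
        (forall s t n, cS s -> cS t -> gpow cmul cone (cmul s t) n = cone ->
           gpow hm h1 (hm (f s) (f t)) n = h1) ->
        exists phi : cW -> H,
          (forall x y, phi (cmul x y) = hm (phi x) (phi y)) /\
          (forall s, cS s -> phi s = f s)
}.

Section Cox.
Variable W : CoxeterSystem.

Definition has_length (w : W) (n : nat) : Prop :=
  (exists l, Forall (cS W) l /\ length l = n /\ word_prod (cmul W) (cone W) l = w) /\
  (forall l, Forall (cS W) l -> word_prod (cmul W) (cone W) l = w -> n <= length l).

Definition spherical : Prop := exists l : list W, forall w, In w l.

Definition in_parabolic (J : W -> Prop) (w : W) : Prop :=
  exists l, Forall J l /\ word_prod (cmul W) (cone W) l = w.

(* W-metric building (Abramenko-Brown, Def. 5.1) *)
Definition is_building (Ch : Type) (delta : Ch -> Ch -> W) : Prop :=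
  (exists c : Ch, True) /\
  (forall C D, delta C D = cone W <-> C = D) /\
  (forall C D C' s, cS W s -> delta C' C = s ->
     (delta C' D = cmul W s (delta C D) \/ delta C' D = delta C D) /\
     ((exists n, has_length (delta C D) n /\
                 has_length (cmul W s (delta C D)) (S n)) ->
        delta C' D = cmul W s (delta C D))) /\
  (forall C D s, cS W s ->
     exists C', delta C' C = s /\ delta C' D = cmul W s (delta C D)).

(* thick: every panel contains at least three chambers *)
Definition thick (Ch : Type) (delta : Ch -> Ch -> W) : Prop :=
  forall (c : Ch) s, cS W s ->
    exists d1 d2, delta c d1 = s /\ delta c d2 = s /\ d1 <> d2.

Definition apartment (Ch : Type) (delta : Ch -> Ch -> W) (A : Ch -> Prop) : Prop :=
  exists f : W -> Ch,
    (forall x y, delta (f x) (f y) = cmul W (cinv W x) y) /\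
    (forall c, A c <-> exists w, f w = c).

Definition residue (Ch : Type) (delta : Ch -> Ch -> W) (J : W -> Prop) (c : Ch)
  : Ch -> Prop := fun d => in_parabolic J (delta c d).

Definition is_residue (Ch : Type) (delta : Ch -> Ch -> W) (R : Ch -> Prop) : Prop :=
  exists (J : W -> Prop) (c : Ch), (forall s, J s -> cS W s) /\
    (forall d, R d <-> residue delta J c d).
End Cox.

Record TopGroup := {
  tG :> Type;
  tmul : tG -> tG -> tG;
  tone : tG;
  tinv : tG -> tG;
  topen : (tG -> Prop) -> Prop;
  t_group : is_group tmul tone tinv;
  t_open_full : topen (fun _ => True);
  t_open_inter : forall U V, topen U -> topen V -> topen (fun x => U x /\ V x);
  t_open_union : forall (I : Type) (U : I -> tG -> Prop),
      (forall i, topen (U i)) -> topen (fun x => exists i, U i x);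
  (* multiplication G x G -> G continuous for the product topology *)
  t_mul_cont : forall U x y, topen U -> U (tmul x y) ->
      exists A B, topen A /\ topen B /\ A x /\ B y /\
        (forall a b, A a -> B b -> U (tmul a b));
  t_inv_cont : forall U, topen U -> topen (fun x => U (tinv x))
}.

Definition tclosed (G : TopGroup) (F : G -> Prop) : Prop :=
  topen G (fun x => ~ F x).

Definition compact (G : TopGroup) : Prop :=
  forall (I : Type) (U : I -> G -> Prop),
    (forall i, topen G (U i)) -> (forall x, exists i, U i x) ->
    exists l : list I, forall x, exists i, In i l /\ U i x.

Section Act.
Variables (G : TopGroup) (W : CoxeterSystem) (Ch : Type) (delta : Ch -> Ch -> W)
          (act : G -> Ch -> Ch).

Definition type_preserving_action : Prop :=
  (forall c, act (tone G) c = c) /\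
  (forall g h c, act (tmul G g h) c = act g (act h c)) /\
  (forall g c d, delta (act g c) (act g d) = delta c d).

Definition maps_set (g : G) (X Y : Ch -> Prop) : Prop :=
  forall y, Y y <-> exists x, X x /\ act g x = y.

Definition continuous_action : Prop :=
  forall R, @is_residue W Ch delta R -> @tclosed G (fun g => maps_set g R R).

Definition strongly_transitive : Prop :=
  forall A A' c c', @apartment W Ch delta A -> @apartment W Ch delta A' -> A c -> A' c' ->
    exists g, maps_set g A A' /\ act g c = c'.
End Act.

(* Fix a chamber c and a generator s, and let K be the stabiliser of c.  K is closed
   (continuity), and strong transitivity makes K transitive on the chambers s-adjacent to c,
   so the set {g | delta c (g c) = s} is a double coset K g0 K, closed by compactness.  Hence
   K has finitely many cosets in the compact stabiliser of the s-panel of c: panels are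
   finite.  Spheres {d | delta c d = w} are then finite by induction on a word for w, and the
   building, a union over the finite group W of spheres, is finite. *)

From Stdlib Require Import List Arith Lia Bool.
From Stdlib Require Import ClassicalEpsilon Classical FunctionalExtensionality
  PropExtensionality ProofIrrelevance.
Import ListNotations.

(** * Groups given by explicit operations *)

Section GroupFacts.
Context {T : Type} {mul : T -> T -> T} {one : T} {inv : T -> T}.
Hypothesis Hg : is_group mul one inv.

Lemma g_assoc x y z : mul x (mul y z) = mul (mul x y) z.
Proof. apply Hg. Qed.
Lemma g_1l x : mul one x = x. Proof. apply Hg. Qed.
Lemma g_1r x : mul x one = x. Proof. apply Hg. Qed.
Lemma g_vl x : mul (inv x) x = one. Proof. apply Hg. Qed.
Lemma g_vr x : mul x (inv x) = one. Proof. apply Hg. Qed.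

Lemma g_cancl x y z : mul x y = mul x z -> y = z.
Proof. intro H. rewrite <- (g_1l y), <- (g_1l z), <- (g_vl x), <- !g_assoc, H. reflexivity. Qed.
Lemma g_cancr x y z : mul y x = mul z x -> y = z.
Proof. intro H. rewrite <- (g_1r y), <- (g_1r z), <- (g_vr x), !g_assoc, H. reflexivity. Qed.
Lemma g_Kl x y : mul (inv x) (mul x y) = y.
Proof. rewrite g_assoc, g_vl, g_1l. reflexivity. Qed.
Lemma g_Kr x y : mul x (mul (inv x) y) = y.
Proof. rewrite g_assoc, g_vr, g_1l. reflexivity. Qed.
Lemma g_inv_uniq x y : mul x y = one -> inv x = y.
Proof. intro H. apply (g_cancl x). rewrite g_vr, H. reflexivity. Qed.
Lemma g_invK x : inv (inv x) = x.
Proof. apply g_inv_uniq. apply g_vl. Qed.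
Lemma g_inv1 : inv one = one.
Proof. apply g_inv_uniq. apply g_1l. Qed.
Lemma g_invM x y : inv (mul x y) = mul (inv y) (inv x).
Proof. apply g_inv_uniq. rewrite g_assoc, <- (g_assoc x y), g_vr, g_1r, g_vr. reflexivity. Qed.
Lemma g_idem x : mul x x = x -> x = one.
Proof. intro H. apply (g_cancl x). rewrite H, g_1r. reflexivity. Qed.

Lemma gpow_add x m n : gpow mul one x (m + n) = mul (gpow mul one x m) (gpow mul one x n).
Proof. induction m; simpl. rewrite g_1l; auto. rewrite IHm, g_assoc. auto. Qed.
Lemma gpow_Sr x n : gpow mul one x (S n) = mul (gpow mul one x n) x.
Proof. replace (S n) with (n + 1) by lia. rewrite gpow_add. simpl. rewrite g_1r. auto. Qed.

Lemma word_prod_app l1 l2 :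
  word_prod mul one (l1 ++ l2) = mul (word_prod mul one l1) (word_prod mul one l2).
Proof. induction l1; simpl. rewrite g_1l; auto. rewrite IHl1, g_assoc; auto. Qed.
End GroupFacts.


(** * Coxeter systems: the length function *)

Section CoxeterLength.
Variable W : CoxeterSystem.
Local Notation "x ** y" := (cmul W x y) (at level 40, left associativity).
Local Notation e := (cone W).
Local Notation iv := (cinv W).
Local Notation S_ := (cS W).
Local Notation wp := (word_prod (cmul W) (cone W)).
Local Notation HW := (c_group W).

Lemma s_ss s : S_ s -> s ** s = e.
Proof. intro H. apply (c_invol W s H). Qed.
Lemma s_ne1 s : S_ s -> s <> e.
Proof. intro H. apply (c_invol W s H). Qed.
Lemma s_inv s : S_ s -> iv s = s.
Proof. intro H. apply (g_inv_uniq HW). apply s_ss; auto. Qed.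

Lemma wp_rev l : Forall S_ l -> iv (wp l) = wp (rev l).
Proof.
  induction l; simpl; intro F. apply (g_inv1 HW).
  inversion F; subst. rewrite (g_invM HW), IHl by auto.
  rewrite (word_prod_app HW). simpl. rewrite (g_1r HW), s_inv; auto.
Qed.

Lemma length_exists w : exists n, has_length W w n.
Proof.
  destruct (c_gen W w) as [l [F E]].
  assert (forall k, (exists l, Forall S_ l /\ wp l = w /\ length l = k) ->
                    exists n, has_length W w n).
  { induction k as [k IH] using lt_wf_ind. intros [l0 [F0 [E0 L0]]].
    destruct (classic (exists l, Forall S_ l /\ wp l = w /\ length l < k))
      as [[l1 [F1 [E1 L1]]]|N].
    - apply (IH (length l1)); eauto.
    - exists k. split. exists l0; auto.
      intros l1 F1 E1. destruct (le_lt_dec k (length l1)); auto.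
      exfalso; apply N; eauto. }
  eauto.
Qed.

Definition len (w : W) : nat :=
  proj1_sig (constructive_indefinite_description _ (length_exists w)).

Lemma len_spec w : has_length W w (len w).
Proof. unfold len. destruct (constructive_indefinite_description _ _). auto. Qed.
Lemma len_le l : Forall S_ l -> len (wp l) <= length l.
Proof. intro F. apply (proj2 (len_spec (wp l))); auto. Qed.
Lemma len_word w : exists l, Forall S_ l /\ length l = len w /\ wp l = w.
Proof. apply (proj1 (len_spec w)). Qed.
Lemma len_has w n : n = len w -> has_length W w n.
Proof. intros ->; apply len_spec. Qed.

Definition reduced (l : list W) := Forall S_ l /\ len (wp l) = length l.

Lemma reduced_word w : exists l, reduced l /\ wp l = w.
Proof.
  destruct (len_word w) as [l [F [L E]]]. exists l. repeat split; auto. rewrite E; auto.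
Qed.

Lemma len_inv w : len (iv w) = len w.
Proof.
  destruct (len_word w) as [l [F [L E]]]. destruct (len_word (iv w)) as [l' [F' [L' E']]].
  apply Nat.le_antisymm.
  - rewrite <- L, <- E, wp_rev by auto. rewrite <- (length_rev l).
    apply len_le, Forall_rev; auto.
  - rewrite <- L', <- (g_invK HW w), <- E', wp_rev by auto. rewrite <- (length_rev l').
    apply len_le, Forall_rev; auto.
Qed.

Lemma len_1 : len e = 0.
Proof. assert (len (wp []) <= 0) by (apply len_le; auto). simpl in H. lia. Qed.
Lemma len_0 w : len w = 0 -> w = e.
Proof. intro H. destruct (len_word w) as [l [F [L E]]]. destruct l; simpl in *; try lia. auto. Qed.

Lemma len_s s : S_ s -> len s = 1.
Proof.
  intro H. assert (len (wp [s]) <= 1) by (apply len_le; auto).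
  simpl in H0. rewrite (g_1r HW) in H0. destruct (len s) eqn:E; try lia.
  apply len_0 in E. exfalso. apply (s_ne1 s H E).
Qed.

Lemma len_mul w v : len (w ** v) <= len w + len v.
Proof.
  destruct (len_word w) as [l [F [L E]]]. destruct (len_word v) as [l' [F' [L' E']]].
  rewrite <- L, <- L', <- E, <- E', <- (word_prod_app HW), <- length_app.
  apply len_le, Forall_app; auto.
Qed.

Lemma len_ws w s : S_ s -> len (w ** s) <= S (len w) /\ len w <= S (len (w ** s)).
Proof.
  intro H. split. pose proof (len_mul w s). rewrite (len_s s H) in H0; lia.
  pose proof (len_mul (w ** s) s). rewrite (len_s s H) in H0.
  rewrite <- (g_assoc HW), s_ss, (g_1r HW) in H0; auto; lia.
Qed.
Lemma len_sw w s : S_ s -> len (s ** w) <= S (len w) /\ len w <= S (len (s ** w)).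
Proof.
  intro H. split. pose proof (len_mul s w). rewrite (len_s s H) in H0; lia.
  pose proof (len_mul s (s ** w)). rewrite (len_s s H) in H0.
  rewrite (g_assoc HW), s_ss, (g_1l HW) in H0; auto; lia.
Qed.

Lemma reduced_app l1 l2 : reduced (l1 ++ l2) -> reduced l1 /\ reduced l2.
Proof.
  intros [F L]. apply Forall_app in F as [F1 F2].
  rewrite (word_prod_app HW), length_app in L.
  pose proof (len_le l1 F1). pose proof (len_le l2 F2). pose proof (len_mul (wp l1) (wp l2)).
  split; split; auto; lia.
Qed.

Lemma reduced_cat l1 l2 : reduced l1 -> reduced l2 ->
  len (wp l1 ** wp l2) = length l1 + length l2 -> reduced (l1 ++ l2).
Proof.
  intros [F1 _] [F2 _] L. split. apply Forall_app; auto.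
  rewrite (word_prod_app HW), length_app. auto.
Qed.
Lemma len_last_letter x n : len x = S n ->
  exists x' a, S_ a /\ x = x' ** a /\ len x' = n.
Proof.
  intro Lx. destruct (reduced_word x) as [l [[F L] E]].
  destruct l as [|a l0] using rev_ind.
  { rewrite <- E in Lx. simpl in Lx. rewrite len_1 in Lx. lia. }
  clear IHl0. pose proof (reduced_app l0 [a] (conj F L)) as [[_ L1] _].
  apply Forall_app in F as [_ Fs]. inversion Fs as [|? ? Ha _]; subst.
  exists (wp l0), a. split; auto. split.
  - rewrite (word_prod_app HW). simpl. rewrite (g_1r HW). auto.
  - rewrite length_app in L. simpl in L. lia.
Qed.
End CoxeterLength.

(** * The Tits reflection cocycle *)

(* Permutations of a type form a group; it is the target of the Tits representation. *)
Record perm (X : Type) := mkPerm { pf : X -> X; pg : X -> X;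
  pfg : forall x, pf (pg x) = x; pgf : forall x, pg (pf x) = x }.
Arguments mkPerm {X} pf pg pfg pgf.
Arguments pf {X} p x.
Arguments pg {X} p x.
Arguments pfg {X} p x.
Arguments pgf {X} p x.

Lemma perm_ext X (p q : perm X) : (forall x, pf p x = pf q x) -> p = q.
Proof.
  intro H. assert (Hf : pf p = pf q) by (apply functional_extensionality; auto).
  assert (Hg : pg p = pg q).
  { apply functional_extensionality. intro x. rewrite <- (pfg q x) at 1.
    rewrite <- Hf. apply pgf. }
  destruct p as [f g a b], q as [f' g' a' b']. simpl in *. subst.
  f_equal; apply proof_irrelevance.
Qed.

Definition pcomp {X} (p q : perm X) : perm X :=
  mkPerm (fun x => pf p (pf q x)) (fun x => pg q (pg p x))
    (fun x => eq_trans (f_equal (pf p) (pfg q (pg p x))) (pfg p x))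
    (fun x => eq_trans (f_equal (pg q) (pgf p (pf q x))) (pgf q x)).
Definition pid X : perm X := mkPerm (fun x => x) (fun x => x) (fun x => eq_refl) (fun x => eq_refl).
Definition pinv {X} (p : perm X) : perm X := mkPerm (pg p) (pf p) (pgf p) (pfg p).

Lemma perm_group X : is_group (@pcomp X) (pid X) (@pinv X).
Proof. repeat split; intros; apply perm_ext; intros; simpl; auto. apply pgf. apply pfg. Qed.

Definition eqbc {A : Type} (x y : A) : bool :=
  if excluded_middle_informative (x = y) then true else false.
Lemma eqbc_true {A : Type} (x y : A) : eqbc x y = true <-> x = y.
Proof.
  unfold eqbc. destruct (excluded_middle_informative (x = y)); split; auto; discriminate.
Qed.
Lemma eqbc_iff {A : Type} (x y x' y' : A) : (x = y <-> x' = y') -> eqbc x y = eqbc x' y'.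
Proof.
  intro H. unfold eqbc.
  destruct (excluded_middle_informative (x = y)), (excluded_middle_informative (x' = y'));
    auto; tauto.
Qed.

Section TitsCocycle.
Variable W : CoxeterSystem.
Local Notation "x ** y" := (cmul W x y) (at level 40, left associativity).
Local Notation e := (cone W).
Local Notation iv := (cinv W).
Local Notation S_ := (cS W).
Local Notation wp := (word_prod (cmul W) (cone W)).
Local Notation HW := (c_group W).
Local Notation X := (cW W * bool)%type.

Definition tits_perm (s : W) : perm X.
Proof.
  refine (mkPerm (fun z => (s ** fst z ** iv s, xorb (snd z) (eqbc (fst z) s)))
              (fun z => (iv s ** fst z ** s, xorb (snd z) (eqbc (iv s ** fst z ** s) s))) _ _).
  - intros [w b]; simpl. f_equal.
    + rewrite <- !(g_assoc HW), (g_vr HW), (g_1r HW), !(g_assoc HW), (g_vr HW), (g_1l HW). auto.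
    + rewrite xorb_assoc, xorb_nilpotent, xorb_false_r. auto.
  - intros [w b]; simpl. f_equal.
    + rewrite <- !(g_assoc HW), (g_vl HW), (g_1r HW), !(g_assoc HW), (g_vl HW), (g_1l HW). auto.
    + replace (iv s ** (s ** w ** iv s) ** s) with w.
      rewrite xorb_assoc, xorb_nilpotent, xorb_false_r. auto.
      rewrite <- !(g_assoc HW), (g_vl HW), (g_1r HW), !(g_assoc HW), (g_vl HW), (g_1l HW). auto.
Defined.

Lemma tits_perm_invol s : S_ s -> pcomp (tits_perm s) (tits_perm s) = pid X.
Proof.
  intro H. apply perm_ext. intros [w b]. simpl. rewrite (s_inv W s H).
  f_equal.
  - rewrite <- !(g_assoc HW), (s_ss W s H), (g_1r HW), !(g_assoc HW), (s_ss W s H), (g_1l HW). auto.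
  - replace (eqbc (s ** w ** s) s) with (eqbc w s).
    rewrite xorb_assoc, xorb_nilpotent, xorb_false_r. auto.
    apply eqbc_iff. split; intro E. subst. rewrite <- (g_assoc HW), (s_ss W s H), (g_1r HW). auto.
    apply (g_cancl HW s). apply (g_cancr HW s). rewrite E, (s_ss W s H), (g_1l HW). auto.
Qed.

Fixpoint hits (rho : nat -> W) (w : W) (m : nat) : bool :=
  match m with O => false | S m' => xorb (hits rho w m') (eqbc w (rho m')) end.

Lemma hits_periodic rho w n m : (forall j, rho (n + j) = rho j) ->
  hits rho w (n + m) = xorb (hits rho w n) (hits rho w m).
Proof.
  intro P. induction m. simpl. rewrite Nat.add_0_r, xorb_false_r. auto.
  rewrite Nat.add_succ_r. simpl. rewrite IHm, P, xorb_assoc. auto.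
Qed.

Lemma conj_eq (u w v z : W) : (u ** w ** v = z) <-> (w = iv u ** z ** iv v).
Proof.
  split; intro E.
  - rewrite <- E, !(g_assoc HW), (g_vl HW), (g_1l HW), <- (g_assoc HW), (g_vr HW), (g_1r HW); auto.
  - rewrite E, !(g_assoc HW), (g_vr HW), (g_1l HW), <- (g_assoc HW), (g_vl HW), (g_1r HW); auto.
Qed.

(* The k-th power of
   tits_perm s o tits_perm t conjugates by (st)^k and flips the sign according to the
   reflections (ts)^j t, j < 2k, which are periodic modulo n. *)
Section Braid.
Variables s t : W.
Hypothesis Hs : S_ s.
Hypothesis Ht : S_ t.
Local Notation a := (s ** t).
Local Notation b := (t ** s).
Local Notation pw := (gpow (cmul W) e).
Let rho j := pw b j ** t.

Lemma ab_inv k : iv (pw a k) = pw b k.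
Proof.
  induction k. simpl. apply (g_inv1 HW).
  rewrite (gpow_Sr HW b). simpl gpow. rewrite (g_invM HW), IHk. f_equal.
  rewrite (g_invM HW), (s_inv W s Hs), (s_inv W t Ht). auto.
Qed.
Lemma ba_inv k : iv (pw b k) = pw a k.
Proof. rewrite <- ab_inv. apply (g_invK HW). Qed.
Lemma t_a k : t ** pw a k = pw b k ** t.
Proof.
  induction k; simpl. rewrite (g_1l HW), (g_1r HW). auto.
  rewrite <- !(g_assoc HW), IHk, (g_assoc HW). auto.
Qed.

Lemma tits_braid_pow k w x :
  pf (gpow (@pcomp X) (pid X) (pcomp (tits_perm s) (tits_perm t)) k) (w, x) =
  (pw a k ** w ** pw b k, xorb x (hits rho w (2 * k))).
Proof.
  induction k. simpl. rewrite (g_1l HW), (g_1r HW), xorb_false_r. auto.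
  change (gpow (@pcomp X) (pid X) (pcomp (tits_perm s) (tits_perm t)) (S k)) with
    (pcomp (pcomp (tits_perm s) (tits_perm t))
       (gpow (@pcomp X) (pid X) (pcomp (tits_perm s) (tits_perm t)) k)).
  simpl pf. rewrite IHk. simpl fst. simpl snd. rewrite (s_inv W s Hs), (s_inv W t Ht).
  replace (2 * S k) with (S (S (2 * k))) by lia. simpl hits. f_equal.
  - rewrite (gpow_Sr HW (t ** s) k). simpl gpow. rewrite <- !(g_assoc HW). reflexivity.
  - rewrite !xorb_assoc. f_equal. f_equal. f_equal.
    + apply eqbc_iff. rewrite conj_eq, ba_inv. unfold rho.
      replace (2 * k) with (k + k) by lia.
      rewrite (gpow_add HW), <- !(g_assoc HW), <- t_a, ab_inv, Nat.add_0_r. tauto.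
    + apply eqbc_iff. rewrite conj_eq, (s_inv W t Ht), conj_eq, ba_inv. unfold rho.
      replace (S (k + (k + 0))) with (k + (1 + k)) by lia.
      rewrite !(gpow_add HW). simpl gpow. rewrite (g_1r HW), <- !(g_assoc HW), <- t_a, ab_inv.
      tauto.
Qed.

Lemma tits_braid n : pw a n = e ->
  gpow (@pcomp X) (pid X) (pcomp (tits_perm s) (tits_perm t)) n = pid X.
Proof.
  intro H. assert (Hb : pw b n = e) by (rewrite <- ab_inv, H; apply (g_inv1 HW)).
  apply perm_ext. intros [w x]. rewrite tits_braid_pow, H, Hb, (g_1l HW), (g_1r HW). simpl.
  rewrite Nat.add_0_r, hits_periodic, xorb_nilpotent, xorb_false_r; auto.
  intro j. unfold rho. rewrite (gpow_add HW), Hb, (g_1l HW). auto.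
Qed.
End Braid.

(* The reflection cocycle: theta u w records whether the "reflection" w is crossed by u.
   It is obtained from the homomorphism W -> perm (W x bool) extending tits_perm, which
   exists by the universal property of the Coxeter presentation. *)
Lemma reflection_cocycle : exists theta : W -> W -> bool,
  (forall u v w, theta (u ** v) w = xorb (theta v w) (theta u (v ** w ** iv v))) /\
  (forall s w, S_ s -> (theta s w = true <-> w = s)) /\
  (forall w, theta e w = false).
Proof.
  destruct (c_presentation W (perm_group X) tits_perm) as [phi [Hm Hs]].
  - apply tits_perm_invol.
  - intros s t n Hs Ht H. exact (tits_braid s t Hs Ht n H).
  - assert (P1 : phi e = pid X).
    { apply (g_idem (perm_group X)). rewrite <- Hm, (g_1l HW). auto. }
    (* phi v acts on the first component by conjugation, the sign is shifted additively *)
    assert (Sh : forall v w x,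
      pf (phi v) (w, x) = (v ** w ** iv v, xorb x (snd (pf (phi v) (w, false))))).
    { intro v. destruct (c_gen W v) as [l [F E]]. subst v. induction l; intros w x.
      - cbn [word_prod fold_right]. rewrite P1. cbn [pf pid fst snd].
        rewrite (g_inv1 HW), (g_1l HW), (g_1r HW), xorb_false_r. auto.
      - cbn [word_prod fold_right]. inversion F; subst. rewrite Hm, Hs by auto.
        cbn [pf pcomp tits_perm]. change (fold_right (cmul W) e l) with (wp l).
        rewrite (IHl H2 w x), (IHl H2 w false). cbn [fst snd]. f_equal.
        + rewrite (g_invM HW), <- !(g_assoc HW). auto.
        + rewrite xorb_assoc. auto. }
    exists (fun v w => snd (pf (phi v) (w, false))). repeat split.
    + intros u v w. rewrite Hm. cbn [pf pcomp]. rewrite (Sh v), Sh. cbn [fst snd]. auto.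
    + rewrite Hs by auto. cbn [pf tits_perm fst snd]. apply eqbc_true.
    + rewrite Hs by auto. cbn [pf tits_perm fst snd]. apply eqbc_true.
    + intro w. rewrite P1. auto.
Qed.
End TitsCocycle.

(** * Consequences of the reflection cocycle *)

Section CocycleConsequences.
Variable W : CoxeterSystem.
Local Notation "x ** y" := (cmul W x y) (at level 40, left associativity).
Local Notation e := (cone W).
Local Notation iv := (cinv W).
Local Notation S_ := (cS W).
Local Notation wp := (word_prod (cmul W) (cone W)).
Local Notation HW := (c_group W).
Local Notation len := (len W).

Variable theta : W -> W -> bool.
Hypothesis Hco : forall u v w, theta (u ** v) w = xorb (theta v w) (theta u (v ** w ** iv v)).
Hypothesis Hts : forall s w, S_ s -> (theta s w = true <-> w = s).
Hypothesis Ht1 : forall w, theta e w = false.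

Definition refl (t : W) := exists u s, S_ s /\ t = u ** s ** iv u.

Lemma refl_s s : S_ s -> refl s.
Proof. intro H. exists e, s. split; auto. rewrite (g_1l HW), (g_inv1 HW), (g_1r HW). auto. Qed.
Lemma refl_conj u s : S_ s -> refl (u ** s ** iv u).
Proof. intro H. exists u, s. auto. Qed.
Lemma refl_sq t : refl t -> t ** t = e.
Proof.
  intros [u [s [Hs ->]]].
  rewrite <- !(g_assoc HW), (g_Kl HW), (g_assoc HW s s), (s_ss W s Hs), (g_1l HW), (g_vr HW). auto.
Qed.
Lemma refl_inv t : refl t -> iv t = t.
Proof. intro H. apply (g_inv_uniq HW). apply refl_sq; auto. Qed.

Lemma theta_deletion l t : Forall S_ l -> theta (wp l) t = true ->
  exists l1 l2, length l1 + length l2 < length l /\ Forall S_ (l1 ++ l2) /\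
                wp l ** t = wp (l1 ++ l2).
Proof.
  induction l as [|a l IH]; intros F H. simpl in H. rewrite Ht1 in H. discriminate.
  inversion F; subst. simpl in H. change (fold_right (cmul W) e l) with (wp l) in H.
  rewrite Hco in H. destruct (theta (wp l) t) eqn:E.
  - destruct (IH H3 eq_refl) as [l1 [l2 [L [F' E']]]]. exists (a :: l1), l2. simpl.
    split. lia. split. constructor; auto.
    change (fold_right (cmul W) e (l1 ++ l2)) with (wp (l1 ++ l2)).
    rewrite <- E', <- (g_assoc HW). auto.
  - simpl in H. apply Hts in H; auto. exists [], l. simpl. split. lia. split; auto.
    change (fold_right (cmul W) e l) with (wp l).
    rewrite <- (g_assoc HW). apply (f_equal (fun z => z ** wp l)) in H.
    rewrite <- !(g_assoc HW), (g_vl HW), (g_1r HW) in H.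
    rewrite H, (g_assoc HW), (s_ss W a H2), (g_1l HW). auto.
Qed.

Lemma theta_len_down w t : theta w t = true -> len (w ** t) < len w.
Proof.
  intro H. destruct (reduced_word W w) as [l [[F L] E]]. subst w.
  destruct (theta_deletion l t F H) as [l1 [l2 [L' [F' E']]]]. rewrite E'.
  pose proof (len_le W _ F'). rewrite length_app in H0. lia.
Qed.

Lemma theta_inv u x : theta (iv u) x = theta u (iv u ** x ** u).
Proof.
  pose proof (Hco u (iv u) x). rewrite (g_vr HW), Ht1, (g_invK HW) in H.
  destruct (theta (iv u) x), (theta u (iv u ** x ** u)); simpl in *; auto.
Qed.

Lemma theta_refl_self t : refl t -> theta t t = true.
Proof.
  intro R. pose proof R as [u [s [Hs E]]]. rewrite E at 1. rewrite Hco, theta_inv.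
  assert (iv u ** t ** u = s)
    by (rewrite E, <- !(g_assoc HW), (g_Kl HW), (g_vl HW), (g_1r HW); auto).
  rewrite (g_invK HW), H, Hco.
  assert (s ** s ** iv s = s) by (rewrite <- (g_assoc HW), (g_vr HW), (g_1r HW); auto).
  rewrite H0. assert (theta s s = true) by (apply Hts; auto). rewrite H1.
  destruct (theta u s); auto.
Qed.

Lemma theta_len_up w t : refl t -> theta w t = false -> len w < len (w ** t).
Proof.
  intros R H. assert (theta (w ** t) t = true).
  { rewrite Hco, theta_refl_self by auto.
    rewrite (refl_inv t R), refl_sq, (g_1l HW), H by auto. auto. }
  apply theta_len_down in H0. rewrite <- (g_assoc HW), refl_sq, (g_1r HW) in H0 by auto. auto.
Qed.

Lemma len_step w s : S_ s -> len (w ** s) = S (len w) \/ len w = S (len (w ** s)).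
Proof.
  intro H. pose proof (len_ws W w s H). destruct (theta w s) eqn:E.
  - apply theta_len_down in E. lia.
  - apply theta_len_up in E. lia. apply refl_s; auto.
Qed.

Lemma longest_crosses_all w0 : (forall w, len w <= len w0) ->
  forall t, refl t -> theta (iv w0) t = true.
Proof.
  intros M t R. destruct (theta (iv w0) t) eqn:E; auto. apply theta_len_up in E; auto.
  specialize (M (iv (iv w0 ** t))). rewrite (len_inv W) in M, E. lia.
Qed.

Lemma longest_prefix w0 : (forall w, len w <= len w0) ->
  forall x, len x + len (iv x ** w0) = len w0.
Proof.
  intros M. assert (forall n x, len x = n -> len x + len (iv x ** w0) = len w0).
  { induction n; intros x Lx.
    - apply (len_0 W) in Lx. subst x. rewrite (g_inv1 HW), (g_1l HW), (len_1 W). auto.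
    - destruct (len_last_letter W x n Lx) as [x' [a [Ha [-> Lx']]]].
      specialize (IHn x' Lx'). set (y := iv x' ** w0) in *.
      assert (Ex : iv (x' ** a) ** w0 = a ** y)
        by (unfold y; rewrite (g_invM HW), (s_inv W a Ha), (g_assoc HW); auto).
      (* y^-1 = w0^-1 x' crosses a, since x' does not while w0^-1 crosses a^(x') *)
      assert (Th : theta (iv y) a = true).
      { unfold y. rewrite (g_invM HW), (g_invK HW), Hco.
        assert (theta x' a = false).
        { destruct (theta x' a) eqn:E; auto. apply theta_len_down in E. lia. }
        rewrite H, longest_crosses_all; auto. apply refl_conj; auto. }
      apply theta_len_down in Th. rewrite <- (s_inv W a Ha) in Th at 1.
      rewrite <- (g_invM HW), !(len_inv W) in Th.
      pose proof (len_sw W y a Ha). rewrite Ex. lia. }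
  intro x. apply (H (len x)); auto.
Qed.
End CocycleConsequences.

Lemma max_in_list (A : Type) (f : A -> nat) (l : list A) (a0 : A) :
  exists m, forall x, In x l -> f x <= f m.
Proof.
  induction l. exists a0. intros x []. destruct IHl as [m Hm].
  destruct (le_lt_dec (f a) (f m)). exists m. intros x [->|H]; auto.
  exists a. intros x [->|H]; auto. specialize (Hm x H). lia.
Qed.

Lemma coxeter_len_step (W : CoxeterSystem) w s : cS W s ->
  len W (cmul W w s) = S (len W w) \/ len W w = S (len W (cmul W w s)).
Proof.
  destruct (reflection_cocycle W) as [theta [Hco [Hts Ht1]]]. apply (len_step W theta); auto.
Qed.

Lemma spherical_longest_element (W : CoxeterSystem) : spherical W ->
  exists w0, forall x, len W x + len W (cmul W (cinv W x) w0) = len W w0.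
Proof.
  intros [lw Hl]. destruct (reflection_cocycle W) as [theta [Hco [Hts Ht1]]].
  destruct (max_in_list _ (len W) lw (cone W)) as [w0 Hw0]. exists w0.
  apply (longest_prefix W theta); auto.
Qed.

(** * Buildings: galleries and apartments *)

Section Buildings.
Variable W : CoxeterSystem.
Local Notation "x ** y" := (cmul W x y) (at level 40, left associativity).
Local Notation e := (cone W).
Local Notation iv := (cinv W).
Local Notation S_ := (cS W).
Local Notation wp := (word_prod (cmul W) (cone W)).
Local Notation HW := (c_group W).
Local Notation len := (len W).
Variables (Ch : Type) (delta : Ch -> Ch -> W).
Hypothesis HB : is_building W delta.

Lemma wd1 C D : delta C D = e <-> C = D.
Proof. apply HB. Qed.
Lemma delta_self C : delta C C = e.
Proof. apply wd1. auto. Qed.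
Lemma wd2 C D C' s : S_ s -> delta C' C = s ->
  delta C' D = s ** delta C D \/ delta C' D = delta C D.
Proof. intros. apply (proj1 (proj2 (proj2 HB)) C D C' s); auto. Qed.
Lemma wd2_up C D C' s : S_ s -> delta C' C = s ->
  len (s ** delta C D) = S (len (delta C D)) -> delta C' D = s ** delta C D.
Proof.
  intros. apply (proj1 (proj2 (proj2 HB)) C D C' s); auto.
  exists (len (delta C D)). split; apply len_has; auto.
Qed.
Lemma wd3 C D s : S_ s -> exists C', delta C' C = s /\ delta C' D = s ** delta C D.
Proof. intros. apply (proj2 (proj2 (proj2 HB))); auto. Qed.

Lemma adj_sym C C' s : S_ s -> delta C' C = s -> delta C C' = s.
Proof.
  intros Hs H. destruct (wd2 C C' C' s Hs H) as [E|E]; rewrite delta_self in E.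
  - symmetry. rewrite <- (s_inv W s Hs). apply (g_inv_uniq HW). auto.
  - symmetry in E. apply wd1 in E. subst C'. rewrite delta_self in H.
    exfalso. apply (s_ne1 W s Hs). auto.
Qed.

(* s-equivalence: equal or s-adjacent; its classes are the s-panels. *)
Definition s_equiv (s : W) (x y : Ch) := delta x y = e \/ delta x y = s.

Lemma s_equiv_refl s x : s_equiv s x x.
Proof. left. apply delta_self. Qed.
Lemma s_equiv_sym s x y : S_ s -> s_equiv s x y -> s_equiv s y x.
Proof.
  intros Hs [H|H]. left. apply wd1 in H. subst x. apply delta_self. right. apply adj_sym; auto.
Qed.
Lemma s_equiv_trans s x y z : S_ s -> s_equiv s x y -> s_equiv s y z -> s_equiv s x z.
Proof.
  intros Hs H1 H2. unfold s_equiv in *. destruct H1 as [H|H]. apply wd1 in H. subst x. auto.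
  destruct (wd2 y z x s Hs H) as [E|E]; rewrite E; destruct H2 as [H2|H2]; rewrite H2.
  right. apply (g_1r HW). left. apply (s_ss W s Hs). left; auto. right; auto.
Qed.

Fixpoint gallery (C : Ch) (l : list W) (D : Ch) : Prop :=
  match l with [] => C = D | s :: l' => exists C1, delta C C1 = s /\ gallery C1 l' D end.

Lemma gallery_app l1 l2 C D :
  gallery C (l1 ++ l2) D <-> exists E, gallery C l1 E /\ gallery E l2 D.
Proof.
  revert C. induction l1; intro C; simpl.
  - split. intro; exists C; auto. intros [E [-> H]]; auto.
  - split.
    + intros [C1 [H1 H2]]. apply IHl1 in H2 as [E [H3 H4]]. exists E. split; eauto.
    + intros [E [[C1 [H1 H2]] H3]]. exists C1. split; auto. apply IHl1. eauto.
Qed.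

Lemma gallery_of_word l C D : Forall S_ l -> wp l = delta C D -> gallery C l D.
Proof.
  revert C. induction l as [|s l IH]; intros C F E; simpl in *.
  - symmetry in E. apply wd1 in E. auto.
  - inversion F; subst. destruct (wd3 C D s H1) as [C' [H3 H4]]. exists C'. split.
    apply adj_sym; auto. apply IH; auto.
    rewrite H4, <- E, (g_assoc HW), (s_ss W s H1), (g_1l HW). auto.
Qed.

Lemma gallery_from l C : Forall S_ l -> exists D, gallery C l D.
Proof.
  revert C. induction l as [|s l IH]; intros C F. exists C. simpl; auto.
  inversion F; subst. destruct (wd3 C C s H1) as [C' [H _]].
  destruct (IH C' H2) as [D HD]. exists D. simpl. exists C'. split; auto. apply adj_sym; auto.
Qed.

Lemma reduced_gallery_delta l C D : reduced W l -> gallery C l D -> delta C D = wp l.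
Proof.
  revert C. induction l as [|s l IH]; intros C R G.
  - simpl in G. subst. apply delta_self.
  - simpl in G. destruct G as [C1 [H1 H2]]. change (s :: l) with ([s] ++ l) in R.
    pose proof (reduced_app W [s] l R) as [[Fs _] Rl]. pose proof (Forall_inv Fs) as H3.
    pose proof (IH C1 Rl H2) as IH'. change (wp (s :: l)) with (s ** wp l). rewrite <- IH'.
    apply wd2_up with (C := C1); auto. rewrite IH'.
    destruct R as [_ L]. destruct Rl as [_ L']. change (wp ([s] ++ l)) with (s ** wp l) in L.
    simpl in L. rewrite L, L'. auto.
Qed.

Lemma reduced_gallery_unique l1 l2 C D E E' : reduced W (l1 ++ l2) ->
  gallery C l1 E -> gallery E l2 D -> gallery C l1 E' -> gallery E' l2 D -> E = E'.
Proof.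
  revert C. induction l1 as [|s l1 IH]; intros C R G1 G2 G1' G2'; simpl in *.
  - subst; auto.
  - destruct G1 as [C1 [H1 H2]]. destruct G1' as [C1' [H1' H2']].
    change (s :: l1 ++ l2) with ([s] ++ (l1 ++ l2)) in R.
    pose proof (reduced_app W [s] (l1 ++ l2) R) as [[Fs _] Rl]. pose proof (Forall_inv Fs) as H3.
    assert (C1 = C1').
    { destruct (classic (C1 = C1')) as [|N]; auto. exfalso.
      assert (A : s_equiv s C1' C1).
      { apply s_equiv_trans with C; auto. apply s_equiv_sym; auto. right; auto. right; auto. }
      destruct A as [A|A]. apply wd1 in A. auto.
      assert (D1 : delta C1 D = wp (l1 ++ l2))
        by (apply reduced_gallery_delta; auto; apply gallery_app; eauto).
      assert (D2 : delta C1' D = wp (l1 ++ l2))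
        by (apply reduced_gallery_delta; auto; apply gallery_app; eauto).
      assert (delta C1' D = s ** delta C1 D).
      { apply wd2_up; auto. rewrite D1. destruct R as [_ L]. destruct Rl as [_ L'].
        simpl in L. rewrite L, L'. auto. }
      rewrite D1, D2 in H. apply (s_ne1 W s H3). apply (g_cancr HW (wp (l1 ++ l2))).
      rewrite (g_1l HW). auto. }
    subst C1'. eapply IH; eauto.
Qed.

(* The apartment spanned by two opposite chambers c, c' (delta c c' = w0 longest): the chamber
   f x is the unique chamber with delta c (f x) = x and delta (f x) c' = x^-1 w0. *)
Section OppositeApartment.
Variable w0 : W.
Hypothesis Hpre : forall x, len x + len (iv x ** w0) = len w0.
Hypothesis Hstep : forall w s, S_ s -> len (w ** s) = S (len w) \/ len w = S (len (w ** s)).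
Variables c c' : Ch.
Hypothesis Hcc : delta c c' = w0.

Definition between (x : W) (E : Ch) := delta c E = x /\ delta E c' = iv x ** w0.

Lemma prefix_word_reduced lx ly x : reduced W lx -> wp lx = x ->
  reduced W ly -> wp ly = iv x ** w0 -> reduced W (lx ++ ly).
Proof.
  intros Rx Ex Ry Ey. apply reduced_cat; auto. rewrite Ex, Ey, (g_Kr HW).
  destruct Rx as [_ Lx], Ry as [_ Ly]. rewrite <- Lx, <- Ly, Ex, Ey. symmetry. apply Hpre.
Qed.

Lemma between_exists x : exists E, between x E.
Proof.
  destruct (reduced_word W x) as [lx [Rx Ex]].
  destruct (reduced_word W (iv x ** w0)) as [ly [Ry Ey]].
  pose proof (prefix_word_reduced lx ly x Rx Ex Ry Ey) as R.
  assert (G : gallery c (lx ++ ly) c').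
  { apply gallery_of_word. apply R. rewrite (word_prod_app HW), Ex, Ey, (g_Kr HW). auto. }
  apply gallery_app in G as [E [G1 G2]]. exists E.
  split.
  - rewrite (reduced_gallery_delta lx c E Rx G1). auto.
  - rewrite (reduced_gallery_delta ly E c' Ry G2). auto.
Qed.

Lemma between_unique x E E' : between x E -> between x E' -> E = E'.
Proof.
  intros [H1 H2] [H1' H2'].
  destruct (reduced_word W x) as [lx [Rx Ex]].
  destruct (reduced_word W (iv x ** w0)) as [ly [Ry Ey]].
  apply (reduced_gallery_unique lx ly c c' E E' (prefix_word_reduced lx ly x Rx Ex Ry Ey));
    apply gallery_of_word; try apply Rx; try apply Ry; congruence.
Qed.

Definition apt_map (x : W) : Ch :=
  proj1_sig (constructive_indefinite_description _ (between_exists x)).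
Lemma apt_map_spec x : between x (apt_map x).
Proof. unfold apt_map. destruct (constructive_indefinite_description _ _). auto. Qed.
Lemma apt_map_eq x E : between x E -> apt_map x = E.
Proof. intro H. apply (between_unique x); auto. apply apt_map_spec. Qed.

(* Adjacency along an increasing step: read off a reduced gallery c -> f x -> f (xs) -> c'. *)
Lemma apt_map_adj_up x s : S_ s -> len (x ** s) = S (len x) ->
  delta (apt_map x) (apt_map (x ** s)) = s.
Proof.
  intros Hs L.
  destruct (reduced_word W x) as [lx [Rx Ex]].
  destruct (reduced_word W (iv (x ** s) ** w0)) as [ly [Ry Ey]].
  assert (Rxs : reduced W (lx ++ [s])).
  { apply reduced_cat; auto. split; auto. simpl. rewrite (g_1r HW), len_s; auto.
    simpl. rewrite (g_1r HW), Ex, L. destruct Rx as [_ Lx]. rewrite <- Ex, Lx. lia. }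
  assert (Exs : wp (lx ++ [s]) = x ** s)
    by (rewrite (word_prod_app HW), Ex; simpl; rewrite (g_1r HW); auto).
  pose proof (prefix_word_reduced _ ly (x ** s) Rxs Exs Ry Ey) as R.
  assert (G : gallery c ((lx ++ [s]) ++ ly) c').
  { apply gallery_of_word. apply R. rewrite (word_prod_app HW), Exs, Ey, (g_Kr HW). auto. }
  apply gallery_app in G as [F [G1 G2]]. apply gallery_app in G1 as [E [G0 G3]].
  pose proof (reduced_app W _ _ R) as [R1 R2]. pose proof (reduced_app W _ _ R1) as [R0 R3].
  assert (HE : apt_map x = E).
  { apply apt_map_eq. split. rewrite (reduced_gallery_delta lx c E R0 G0). auto.
    assert (Rs : reduced W (s :: ly)).
    { change (s :: ly) with ([s] ++ ly). rewrite <- app_assoc in R.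
      apply reduced_app in R. apply R. }
    assert (GG : gallery E (s :: ly) c') by (apply (gallery_app [s] ly); eauto).
    rewrite (reduced_gallery_delta _ E c' Rs GG). simpl.
    change (fold_right (cmul W) e ly) with (wp ly). rewrite Ey.
    rewrite (g_invM HW), (s_inv W s Hs), !(g_assoc HW), (s_ss W s Hs), (g_1l HW). auto. }
  assert (HF : apt_map (x ** s) = F).
  { apply apt_map_eq. split.
    - rewrite (reduced_gallery_delta _ c F R1), Exs; auto. apply gallery_app. eauto.
    - rewrite (reduced_gallery_delta ly F c' R2 G2). auto. }
  rewrite HE, HF. simpl in G3. destruct G3 as [C1 [H ->]]. auto.
Qed.

Lemma apt_map_adj x s : S_ s -> delta (apt_map x) (apt_map (x ** s)) = s.
Proof.
  intro Hs. destruct (Hstep x s Hs) as [L|L]. apply apt_map_adj_up; auto.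
  apply adj_sym; auto.
  assert (x ** s ** s = x) by (rewrite <- (g_assoc HW), (s_ss W s Hs), (g_1r HW); auto).
  pose proof (apt_map_adj_up (x ** s) s Hs) as K. rewrite H in K. apply K. exact L.
Qed.

Lemma apt_map_gallery l x : Forall S_ l -> gallery (apt_map x) l (apt_map (x ** wp l)).
Proof.
  revert x. induction l as [|s l IH]; intros x F; simpl.
  - rewrite (g_1r HW). auto.
  - inversion F; subst. exists (apt_map (x ** s)). split. apply apt_map_adj; auto.
    change (fold_right (cmul W) e l) with (wp l). rewrite (g_assoc HW). apply IH; auto.
Qed.

Lemma apt_map_isometry x y : delta (apt_map x) (apt_map y) = iv x ** y.
Proof.
  destruct (reduced_word W (iv x ** y)) as [l [R E]].
  pose proof (apt_map_gallery l x (proj1 R)). rewrite E, (g_Kr HW) in H.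
  rewrite (reduced_gallery_delta l _ _ R H). auto.
Qed.

Lemma apt_map_1 : apt_map e = c.
Proof. apply apt_map_eq. split. apply delta_self. rewrite (g_inv1 HW), (g_1l HW). auto. Qed.
End OppositeApartment.

Lemma apartment_through_adjacent (Hsph : spherical W) c d s : S_ s -> delta c d = s ->
  exists A, apartment W delta A /\ A c /\ A d.
Proof.
  intros Hs Hcd. destruct (spherical_longest_element W Hsph) as [w0 Hpre].
  pose proof (coxeter_len_step W) as Hstep.
  destruct (reduced_word W (s ** w0)) as [l0 [R0 E0]].
  destruct (gallery_from l0 d (proj1 R0)) as [c' G0].
  assert (R : reduced W (s :: l0)).
  { split. constructor; auto. apply R0. simpl. change (fold_right (cmul W) e l0) with (wp l0).
    rewrite E0, (g_assoc HW), (s_ss W s Hs), (g_1l HW). destruct R0 as [_ L0].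
    rewrite <- L0, E0. pose proof (Hpre s). rewrite (s_inv W s Hs), (len_s W s Hs) in H. lia. }
  assert (Hcc : delta c c' = w0).
  { rewrite (reduced_gallery_delta (s :: l0) c c' R).
    - simpl. change (fold_right (cmul W) e l0) with (wp l0).
      rewrite E0, (g_assoc HW), (s_ss W s Hs), (g_1l HW). auto.
    - simpl. eauto. }
  exists (fun z => exists w, apt_map w0 Hpre c c' Hcc w = z). split.
  - exists (apt_map w0 Hpre c c' Hcc). split. intros; apply apt_map_isometry; auto. tauto.
  - split. exists e. apply apt_map_1. exists s. apply apt_map_eq.
    split. auto. rewrite (s_inv W s Hs), (reduced_gallery_delta l0 d c' R0 G0). auto.
Qed.

Lemma apartment_rigid A x y z : apartment W delta A -> A x -> A y -> A z ->
  delta x y = delta x z -> y = z.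
Proof.
  intros [f [Hf HA]] Hx Hy Hz E. apply HA in Hx as [a <-]. apply HA in Hy as [b <-].
  apply HA in Hz as [c0 <-]. rewrite !Hf in E. apply (g_cancl HW) in E. subst. auto.
Qed.
End Buildings.

(** * Compact topological groups *)

Section CompactGroups.
Variable G : TopGroup.
Local Notation "x * y" := (tmul G x y).
Local Notation iv := (tinv G).
Local Notation HG := (t_group G).
Local Notation op := (topen G).

Lemma topen_ext (P Q : G -> Prop) : (forall x, P x <-> Q x) -> op P -> op Q.
Proof.
  intros H O. replace Q with P; auto. apply functional_extensionality. intro x.
  apply propositional_extensionality. auto.
Qed.

Lemma tclosed_ext (P Q : G -> Prop) : (forall g, P g <-> Q g) -> tclosed G P -> tclosed G Q.
Proof. intros H C. apply (topen_ext (fun x => ~ P x)); auto. intro; rewrite H; tauto. Qed.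

Lemma open_local (P : G -> Prop) :
  (forall x, P x -> exists V, op V /\ V x /\ forall y, V y -> P y) -> op P.
Proof.
  intro H. pose (I := {V : G -> Prop | op V /\ forall y, V y -> P y}).
  apply (topen_ext (fun x => exists i : I, proj1_sig i x)).
  - intro x. split.
    + intros [[V [O HV]] Hx]. auto.
    + intro Px. destruct (H x Px) as [V [O [Vx HV]]]. exists (exist _ V (conj O HV)). auto.
  - apply t_open_union. intros [V [O HV]]. simpl. auto.
Qed.

Lemma open_transl (U : G -> Prop) g : op U -> op (fun x => U (g * x)).
Proof.
  intro O. apply open_local. intros x Ux.
  destruct (t_mul_cont G U g x O Ux) as [A [B [OA [OB [Ag [Bx HAB]]]]]]. exists B. auto.
Qed.

Lemma closed_transl (F : G -> Prop) g : tclosed G F -> tclosed G (fun x => F (g * x)).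
Proof. intro C. apply (open_transl (fun x => ~ F x)). auto. Qed.

Fixpoint list_inter {J : Type} (f : J -> G -> Prop) (l : list (option J)) : G -> Prop :=
  match l with
  | [] => fun _ => True
  | i :: l' => fun y => (match i with None => True | Some j => f j y end) /\ list_inter f l' y
  end.

Lemma list_inter_open J f l : (forall j : J, op (f j)) -> op (list_inter f l).
Proof.
  intro H. induction l as [|[j|] l IH]; simpl. apply t_open_full.
  apply t_open_inter; auto. apply t_open_inter; auto. apply t_open_full.
Qed.
Lemma list_inter_all (J : Type) (f : J -> G -> Prop) l y :
  (forall j : J, In (Some j) l -> f j y) -> list_inter f l y.
Proof.
  induction l as [|[j|] l IH]; simpl; intros H. auto.
  split. apply H; auto. apply IH. intros; apply H; auto.
  split; [auto| try (apply IH; intros; apply H; auto)].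
Qed.
Lemma list_inter_in (J : Type) (f : J -> G -> Prop) l y j :
  list_inter f l y -> In (Some j) l -> f j y.
Proof.
  induction l as [|[j'|] l IH]; simpl; intros H1 H2. contradiction.
  destruct H2 as [H2|H2]. inversion H2; subst. tauto. apply IH; tauto.
  destruct H2 as [H2|H2]. discriminate. apply IH; tauto.
Qed.

(* In a compact group the product K F of two closed sets is closed: for h outside K F,
   cover K by open sets A with A^-1 B disjoint from F for an open B containing h, and
   intersect the finitely many B. *)
Lemma product_closed (K F : G -> Prop) : compact G -> tclosed G K -> tclosed G F ->
  tclosed G (fun y => exists k f, K k /\ F f /\ y = k * f).
Proof.
  intros Cp CK CF. unfold tclosed. apply open_local. intros h NX.
  pose (J := {p : (G -> Prop) * (G -> Prop) | op (fst p) /\ op (snd p) /\ snd p h /\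
              forall a b, fst p a -> snd p b -> ~ F (iv a * b)}).
  pose (U := fun (i : option J) =>
               match i with None => fun x => ~ K x | Some j => fst (proj1_sig j) end).
  destruct (Cp (option J) U) as [l Hl].
  - intros [j|]; simpl. destruct j as [p [H1 H2]]. auto. apply CK.
  - intro x. destruct (classic (K x)) as [Kx|NK]; [|exists None; simpl; auto].
    assert (NF : ~ F (iv x * h)).
    { intro Fx. apply NX. exists x, (iv x * h). repeat split; auto. rewrite (g_Kr HG). auto. }
    destruct (t_mul_cont G (fun z => ~ F z) (iv x) h CF NF)
      as [A [B [OA [OB [Ax [Bh HAB]]]]]].
    assert (Hj : op (fun a => A (iv a)) /\ op B /\ B h /\
                 forall a b, A (iv a) -> B b -> ~ F (iv a * b)).
    { split. apply (t_inv_cont G A OA). split; auto. }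
    exists (Some (exist _ ((fun a => A (iv a)), B) Hj)). unfold U. simpl. auto.
  - exists (list_inter (fun j : J => snd (proj1_sig j)) l). split.
    { apply list_inter_open. intros [p [Q1 [H Q2]]]. auto. }
    split. { apply list_inter_all. intros [p [Q1 [Q2 [H Q3]]]] _. auto. }
    intros y Vy [k [f [Kk [Ff ->]]]].
    destruct (Hl k) as [[j|] [Hin Uk]]; unfold U in Uk; simpl in Uk; [|contradiction].
    pose proof (proj2 (proj2 (proj2 (proj2_sig j)))) as Hp.
    pose proof (list_inter_in _ _ l _ _ Vy Hin) as H. simpl in H.
    apply (Hp k (k * f) Uk H). rewrite (g_Kl HG). auto.
Qed.

Lemma finite_translates (P U : G -> Prop) : compact G -> tclosed G P -> op U -> U (tone G) ->
  exists lp, (forall p, In p lp -> P p) /\ forall q, P q -> exists p, In p lp /\ U (iv p * q).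
Proof.
  intros Cp CP OU U1. pose (I := {p | P p}).
  pose (V := fun (i : option I) =>
               match i with
               | None => fun x => ~ P x
               | Some p => fun x => U (iv (proj1_sig p) * x)
               end).
  destruct (Cp (option I) V) as [l Hl].
  - intros [p|]; simpl. apply open_transl; auto. apply CP.
  - intro x. destruct (classic (P x)) as [Px|NP]; [|exists None; simpl; auto].
    exists (Some (exist _ x Px)). simpl. rewrite (g_vl HG). auto.
  - exists (flat_map (fun i : option I => match i with Some p => [proj1_sig p] | None => [] end) l).
    split.
    + intros p Hp. apply in_flat_map in Hp as [[[p' Hp']|] [_ H]]; simpl in H; [|contradiction].
      destruct H as [<-|[]]. auto.
    + intros q Pq. destruct (Hl q) as [[[p Pp]|] [Hin Vq]]; simpl in Vq; [|contradiction].
      exists p. split; auto. apply in_flat_map. exists (Some (exist _ p Pp)). simpl. auto.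
Qed.
End CompactGroups.

Definition finite_set {X : Type} (P : X -> Prop) : Prop :=
  exists L : list X, forall x, P x -> In x L.

Lemma finite_bind {X Y : Type} (P : X -> Prop) (Q : X -> Y -> Prop) :
  finite_set P -> (forall x, P x -> finite_set (Q x)) ->
  finite_set (fun y => exists x, P x /\ Q x y).
Proof.
  intros [L HL] HQ.
  assert (Hlist : forall L', finite_set (fun y => exists x, In x L' /\ P x /\ Q x y)).
  { induction L' as [|a L' [M HM]].
    - exists []. intros y [x [[] _]].
    - destruct (classic (P a)) as [Pa|NPa].
      + destruct (HQ a Pa) as [Ma HMa]. exists (Ma ++ M). intros y [x [[<-|Hx] [Px Qx]]];
          apply in_or_app; [left; auto | right; apply HM; eauto].
      + exists M. intros y [x [[<-|Hx] [Px Qx]]]. contradiction. apply HM; eauto. }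
  destruct (Hlist L) as [M HM]. exists M. intros y [x [Px Qx]]. apply HM. eauto.
Qed.

(* The residues of type {} and {s} are single chambers and s-panels respectively. *)
Lemma parabolic_empty (W : CoxeterSystem) w :
  in_parabolic W (fun _ => False) w <-> w = cone W.
Proof.
  split. intros [l [F E]]. destruct l. auto. inversion F; contradiction.
  intros ->. exists []. auto.
Qed.

Lemma parabolic_single (W : CoxeterSystem) s w : cS W s ->
  (in_parabolic W (fun x => x = s) w <-> w = cone W \/ w = s).
Proof.
  intro Hs. split.
  - intros [l [F E]]. subst w. induction l; simpl. auto. inversion F; subst.
    change (fold_right (cmul W) (cone W) l) with (word_prod (cmul W) (cone W) l).
    destruct (IHl H2) as [E|E]; rewrite E.
    right. apply (g_1r (c_group W)). left. apply (s_ss W s Hs).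
  - intros [->| ->]. exists []. auto. exists [s]. split; auto. simpl. apply (g_1r (c_group W)).
Qed.

(** * Compact groups acting on spherical buildings *)

Section CompactAction.
Variables (G : TopGroup) (W : CoxeterSystem) (Ch : Type) (delta : Ch -> Ch -> W)
  (act : G -> Ch -> Ch).
Hypothesis HB : is_building W delta.
Hypothesis Hsph : spherical W.
Hypothesis Hcp : compact G.
Hypothesis Hact : type_preserving_action G W delta act.
Hypothesis Hcont : continuous_action G W delta act.
Hypothesis Hst : strongly_transitive G W delta act.
Local Notation "x * y" := (tmul G x y).
Local Notation ivg := (tinv G).
Local Notation HG := (t_group G).
Local Notation HW := (c_group W).
Local Notation e := (cone W).
Local Notation S_ := (cS W).

Lemma act1 x : act (tone G) x = x. Proof. apply Hact. Qed.
Lemma actM g h x : act (g * h) x = act g (act h x). Proof. apply Hact. Qed.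
Lemma act_isometry g x y : delta (act g x) (act g y) = delta x y. Proof. apply Hact. Qed.
Lemma actVK g x : act (ivg g) (act g x) = x.
Proof. rewrite <- actM, (g_vl HG), act1. auto. Qed.
Lemma actKV g x : act g (act (ivg g) x) = x.
Proof. rewrite <- actM, (g_vr HG), act1. auto. Qed.

(* The stabiliser of a chamber (a residue of type empty) is closed. *)
Lemma chamber_stabilizer_closed c : tclosed G (fun g => act g c = c).
Proof.
  assert (R : is_residue W delta (fun d => delta c d = e)).
  { exists (fun _ => False), c. split. tauto. intro d. unfold residue.
    rewrite parabolic_empty. tauto. }
  apply (tclosed_ext G
           (fun g => maps_set G act g (fun d => delta c d = e) (fun d => delta c d = e))).
  - intro g. unfold maps_set. split.
    + intro H. symmetry. apply (wd1 W Ch delta HB). apply (H (act g c)).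
      exists c. split; auto. apply delta_self; auto.
    + intros H y. split.
      * intro Hy. exists c. split. apply delta_self; auto. apply (wd1 W Ch delta HB) in Hy.
        rewrite H. auto.
      * intros [x [Hx <-]]. apply (wd1 W Ch delta HB) in Hx. subst x. rewrite H.
        apply delta_self; auto.
  - apply Hcont. auto.
Qed.

Lemma panel_stabilizer_closed s c : S_ s -> tclosed G (fun g => s_equiv W Ch delta s c (act g c)).
Proof.
  intro Hs.
  apply (tclosed_ext G
           (fun g => maps_set G act g (s_equiv W Ch delta s c) (s_equiv W Ch delta s c))).
  - intro g. unfold maps_set. split.
    + intro H. apply H. exists c. split; auto. apply s_equiv_refl; auto.
    + intros H y. split.
      * intro Hy. exists (act (ivg g) y). split; [|apply actKV].
        unfold s_equiv. rewrite <- (act_isometry g), actKV.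
        apply s_equiv_trans with c; auto. apply s_equiv_sym; auto.
      * intros [x [Hx <-]]. apply s_equiv_trans with (act g c); auto.
        unfold s_equiv. rewrite act_isometry. auto.
  - apply Hcont. exists (fun x => x = s), c. split. intros; subst; auto.
    intro d. unfold residue. rewrite parabolic_single; auto. unfold s_equiv. tauto.
Qed.

Lemma stabilizer_transitive_on_panel c e0 d s : S_ s -> delta c e0 = s -> delta c d = s ->
  exists k, act k c = c /\ act k e0 = d.
Proof.
  intros Hs He0 Hd.
  destruct (apartment_through_adjacent W Ch delta HB Hsph c e0 s Hs He0) as [A0 [HA0 [A0c A0e]]].
  destruct (apartment_through_adjacent W Ch delta HB Hsph c d s Hs Hd) as [A1 [HA1 [A1c A1d]]].
  destruct (Hst A0 A1 c c HA0 HA1 A0c A1c) as [k [Mk Hk]]. exists k. split; auto.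
  apply (apartment_rigid W Ch delta A1 c); auto.
  - apply Mk. eauto.
  - rewrite <- Hk at 1. rewrite act_isometry, He0. auto.
Qed.

(* The set of g moving c to an s-adjacent chamber is the double coset K g0 K of the
   stabiliser K of c, hence closed by compactness. *)
Lemma adjacent_movers_closed c s : S_ s -> tclosed G (fun g => delta c (act g c) = s).
Proof.
  intro Hs. destruct (wd3 W Ch delta HB c c s Hs) as [e0 [He0 _]].
  apply (adj_sym W Ch delta HB) in He0; auto.
  destruct (apartment_through_adjacent W Ch delta HB Hsph c e0 s Hs He0) as [A0 [HA0 [A0c A0e]]].
  destruct (Hst A0 A0 c e0 HA0 HA0 A0c A0e) as [g0 [_ Hg0]].
  set (K := fun g => act g c = c).
  apply (tclosed_ext G (fun y => exists k f, K k /\ K (ivg g0 * f) /\ y = k * f)).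
  - intro g. split.
    + intros [k [f [Kk [Kf ->]]]]. unfold K in *. rewrite actM in Kf.
      apply (f_equal (act g0)) in Kf. rewrite actKV, Hg0 in Kf.
      rewrite actM, Kf, <- Kk at 1. rewrite act_isometry. auto.
    + intro Hg. destruct (stabilizer_transitive_on_panel c e0 (act g c) s Hs He0 Hg)
        as [k [Kk Hk]].
      exists k, (ivg k * g). split. auto. split.
      * unfold K. rewrite !actM, <- Hk, actVK, <- Hg0, actVK. auto.
      * rewrite (g_Kr HG). auto.
  - apply product_closed; auto. apply chamber_stabilizer_closed.
    apply (closed_transl G K). apply chamber_stabilizer_closed.
Qed.

(* Panels are finite: the stabiliser of c is open in the compact panel stabiliser. *)
Lemma panel_finite c s : S_ s -> finite_set (fun d => delta c d = s).
Proof.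
  intro Hs.
  assert (U1 : ~ delta c (act (tone G) c) = s).
  { rewrite act1, (delta_self W Ch delta HB). intro H. apply (s_ne1 W s Hs). auto. }
  destruct (finite_translates G _ (fun g => ~ delta c (act g c) = s) Hcp
              (panel_stabilizer_closed s c Hs) (adjacent_movers_closed c s Hs) U1)
    as [lp [Hlp1 Hlp2]].
  exists (map (fun p => act p c) lp). intros d Hd.
  destruct (apartment_through_adjacent W Ch delta HB Hsph c d s Hs Hd) as [A1 [HA1 [A1c A1d]]].
  destruct (Hst A1 A1 c d HA1 HA1 A1c A1d) as [g [_ Hg]].
  assert (Sg : s_equiv W Ch delta s c (act g c)) by (rewrite Hg; right; auto).
  destruct (Hlp2 g Sg) as [p [Hp NX]]. apply in_map_iff. exists p. split; auto.
  assert (Q : s_equiv W Ch delta s c (act (ivg p * g) c)).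
  { unfold s_equiv. rewrite <- (act_isometry p), actM, actKV.
    apply s_equiv_trans with c; auto. apply s_equiv_sym; auto. }
  destruct Q as [Q|Q]; [|contradiction].
  apply (wd1 W Ch delta HB) in Q. rewrite <- Hg, Q at 1. rewrite actM, actKV. auto.
Qed.

Lemma sphere_finite l : Forall S_ l -> forall c,
  finite_set (fun d => delta c d = word_prod (cmul W) e l).
Proof.
  induction l as [|s l IH]; intros F c.
  - exists [c]. intros d Hd. apply (wd1 W Ch delta HB) in Hd. subst. simpl; auto.
  - inversion F; subst.
    destruct (finite_bind (fun c' => delta c c' = s)
                (fun c' d => delta c' d = word_prod (cmul W) e l)
                (panel_finite c s H1) (fun c' _ => IH H2 c')) as [L HL].
    exists L. intros d Hd. apply HL.
    destruct (wd3 W Ch delta HB c d s H1) as [c' [H3 H4]]. exists c'. split.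
    + apply (adj_sym W Ch delta HB); auto.
    + rewrite H4, Hd. simpl. rewrite (g_assoc HW), (s_ss W s H1), (g_1l HW). auto.
Qed.
End CompactAction.

Theorem mainTheorem7 (G : TopGroup) (W : CoxeterSystem) (Ch : Type)
  (delta : Ch -> Ch -> W) (act : G -> Ch -> Ch) :
  @is_building W Ch delta -> spherical W -> @thick W Ch delta ->
  compact G ->
  @type_preserving_action G W Ch delta act ->
  @continuous_action G W Ch delta act ->
  @strongly_transitive G W Ch delta act ->
  exists l : list Ch, forall c : Ch, In c l.
Proof.
  intros HB Hsph _ Hcp Hact Hcont Hst.
  pose proof HB as [[c0 _] _]. pose proof Hsph as [lw Hlw].
  assert (Hspheres : forall w, finite_set (fun d => delta c0 d = w)).
  { intro w. destruct (c_gen W w) as [l [F <-]].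
    apply (sphere_finite G W Ch delta act); auto. }
  destruct (finite_bind (fun _ : W => True) (fun w d => delta c0 d = w))
    as [L HL]; auto.
  - exists lw. auto.
  - exists L. intro d. apply HL. exists (delta c0 d). auto.
Qed.
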